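(* In the closed-loop system of Controller 3 (see context), assume $\xi_i=0$ for all $i\neq k$ and $\xi_k>0$ for one index $k$. Then for every initial condition (with $\omega_i(t_0)=0$), $\phi_i-\bar\phi_i\to 0$ and $\dot\phi_i\to \xi_k/n$ as $t\to\infty$ for all $i=1,\dots,n$.
   Context: Controller 3: for $n\ge2$ robots with real-valued phases $\phi_i$ (indexed counterclockwise at the initial time), gains $k_\phi,k_\omega>0$ and nonnegative constants $\xi_i$, the phase dynamics are $\dot\omega_i=k_\omega(\bar\phi_i-\phi_i)$, $\omega_i(t_0)=0$, $\dot\phi_i=\omega_i+k_\phi(\bar\phi_i-\phi_i)+\xi_i$, where $\bar\phi_1=\frac{\phi_2+\phi_n-2\pi}{2}$, $\bar\phi_i=\frac{\phi_{i+1}+\phi_{i-1}}{2}$ for $2\le i\le n-1$, $\bar\phi_n=\frac{\phi_1+2\pi+\phi_{n-1}}{2}$. *)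

From Stdlib Require Import Reals Lra Lia.
Open Scope R_scope.

(* Robots are indexed 0..n-1 (paper: 1..n).  [phis i] is the phase of robot i.
   phibar for Controller 3 (with the 2*pi wrap between robot n and robot 1). *)
Definition phibar (n : nat) (phis : nat -> R) (i : nat) : R :=
  if Nat.eqb i 0 then (phis 1%nat + phis (n - 1)%nat - 2 * PI) / 2
  else if Nat.eqb i (n - 1)%nat then (phis 0%nat + 2 * PI + phis (n - 2)%nat) / 2
  else (phis (i + 1)%nat + phis (i - 1)%nat) / 2.

Definition tends_at_infty (f : R -> R) (l : R) : Prop :=
  forall eps : R, eps > 0 -> exists T : R, forall t : R, t >= T -> Rabs (f t - l) < eps.

Definition right_cont_at (f : R -> R) (t0 : R) : Prop :=
  forall eps : R, eps > 0 -> exists delta : R, delta > 0 /\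
    forall t : R, t0 <= t < t0 + delta -> Rabs (f t - f t0) < eps.

(* Write P_j = phi_j - 2 pi j / n for the offsets from the splay state and
   Q_j = omega_j + xi_j - a, where a = xi_k / n.  Then phi_i - phibar_i = (L P)_i, where
   L is half the Laplacian of the n-cycle, and the closed loop becomes the error system
       P' = Q + a - kphi L P,      Q' = - komega L P,
   in which sum_j Q_j = 0 because the total angular velocity is conserved and starts at 0.
   For this system V = komega <P, L P> + |Q|^2 - eps <Q, L P> (eps small) is a strict
   Lyapunov function: V >= c1 (|L P|^2 + |Q|^2), and V' <= - c V thanks to the spectral
   bounds |L x|^2 <= 2 <x, L x> and the discrete Poincare inequality |x|^2 <= C |L x|^2 for
   zero-sum x.  Hence V -> 0, so L P -> 0 and Q -> 0, and phi_i' = Q_i + a - kphi (L P)_i -> a. *)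

From Stdlib Require Import Reals Lra Lia Psatz.
Open Scope R_scope.

Fixpoint rsum (f : nat -> R) (m : nat) : R :=
  match m with O => 0 | S m' => rsum f m' + f m' end.

Lemma rsum_ext (f g : nat -> R) (m : nat) :
  (forall i, (i < m)%nat -> f i = g i) -> rsum f m = rsum g m.
Proof.
  induction m as [|m IH]; intros H; simpl; auto.
  rewrite IH, H; auto; intros; apply H; lia.
Qed.

Lemma rsum_plus (f g : nat -> R) (m : nat) :
  rsum (fun i => f i + g i) m = rsum f m + rsum g m.
Proof. induction m as [|m IH]; simpl; [lra | rewrite IH; lra]. Qed.

Lemma rsum_scal (c : R) (f : nat -> R) (m : nat) :
  rsum (fun i => c * f i) m = c * rsum f m.
Proof. induction m as [|m IH]; simpl; [lra | rewrite IH; lra]. Qed.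

Lemma rsum_const (c : R) (m : nat) : rsum (fun _ => c) m = INR m * c.
Proof. induction m as [|m IH]; simpl rsum; [simpl; lra | rewrite IH, S_INR; lra]. Qed.

Lemma rsum_le (f g : nat -> R) (m : nat) :
  (forall i, (i < m)%nat -> f i <= g i) -> rsum f m <= rsum g m.
Proof.
  induction m as [|m IH]; intros H; simpl; [lra|].
  assert (f m <= g m) by (apply H; lia).
  assert (rsum f m <= rsum g m) by (apply IH; intros; apply H; lia).
  lra.
Qed.

Lemma rsum_nonneg (f : nat -> R) (m : nat) :
  (forall i, (i < m)%nat -> 0 <= f i) -> 0 <= rsum f m.
Proof. intros H. rewrite <- (Rmult_0_r (INR m)), <- rsum_const. now apply rsum_le. Qed.

Lemma rsum_abs (f : nat -> R) (m : nat) : Rabs (rsum f m) <= rsum (fun i => Rabs (f i)) m.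
Proof.
  induction m as [|m IH]; simpl; [rewrite Rabs_R0; lra|].
  eapply Rle_trans; [apply Rabs_triang | lra].
Qed.

Lemma rsum_term_le (f : nat -> R) (m k : nat) :
  (k < m)%nat -> (forall i, (i < m)%nat -> 0 <= f i) -> f k <= rsum f m.
Proof.
  induction m as [|m IH]; intros Hk H; [lia|]. simpl.
  assert (0 <= rsum f m) by (apply rsum_nonneg; intros; apply H; lia).
  destruct (Nat.eq_dec k m) as [->|Hkm]; [lra|].
  assert (f k <= rsum f m) by (apply IH; [lia | intros; apply H; lia]).
  assert (0 <= f m) by (apply H; lia). lra.
Qed.

Lemma rsum_single (f : nat -> R) (m k : nat) :
  (k < m)%nat -> (forall i, (i < m)%nat -> i <> k -> f i = 0) -> rsum f m = f k.
Proof.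
  induction m as [|m IH]; intros Hk H; [lia|]. simpl.
  destruct (Nat.eq_dec k m) as [->|Hkm].
  - rewrite (rsum_ext f (fun _ => 0)) by (intros; apply H; lia).
    rewrite rsum_const; lra.
  - rewrite IH, (H m) by (try lia; intros; apply H; lia). lra.
Qed.

Definition cnext (n i : nat) : nat := if Nat.eqb (S i) n then O else S i.
Definition cprev (n i : nat) : nat := if Nat.eqb i O then (n - 1)%nat else (i - 1)%nat.

Lemma cnext_lt (n i : nat) : (i < n)%nat -> (cnext n i < n)%nat.
Proof. unfold cnext; intros; destruct (Nat.eqb_spec (S i) n); lia. Qed.

Lemma cprev_lt (n i : nat) : (i < n)%nat -> (cprev n i < n)%nat.
Proof. unfold cprev; intros; destruct (Nat.eqb_spec i 0); lia. Qed.

Lemma cprev_cnext (n i : nat) : (i < n)%nat -> cprev n (cnext n i) = i.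
Proof.
  unfold cnext, cprev; intros; destruct (Nat.eqb_spec (S i) n);
    [destruct (Nat.eqb_spec 0 0) | destruct (Nat.eqb_spec (S i) 0)]; lia.
Qed.

Lemma cnext_cprev (n i : nat) : (i < n)%nat -> cnext n (cprev n i) = i.
Proof.
  unfold cnext, cprev; intros; destruct (Nat.eqb_spec i 0);
    [destruct (Nat.eqb_spec (S (n - 1)) n) | destruct (Nat.eqb_spec (S (i - 1)) n)]; lia.
Qed.

Lemma cnext_inner (n i : nat) : (S i < n)%nat -> cnext n i = S i.
Proof. unfold cnext; intros; destruct (Nat.eqb_spec (S i) n); lia. Qed.

Lemma cprev_succ (n i : nat) : cprev n (S i) = i.
Proof. unfold cprev; simpl; lia. Qed.

Lemma rsum_cnext (n : nat) (f : nat -> R) :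
  (1 <= n)%nat -> rsum (fun i => f (cnext n i)) n = rsum f n.
Proof.
  intros Hn. destruct n as [|m]; [lia|]. simpl rsum at 1.
  rewrite (rsum_ext _ (fun i => f (S i))) by (intros; rewrite cnext_inner by lia; auto).
  unfold cnext at 1. rewrite Nat.eqb_refl.
  clear Hn. induction m as [|m IH]; simpl in *; lra.
Qed.

Lemma rsum_cprev (n : nat) (f : nat -> R) :
  (1 <= n)%nat -> rsum (fun i => f (cprev n i)) n = rsum f n.
Proof.
  intros Hn. rewrite <- (rsum_cnext n (fun i => f (cprev n i))) by auto.
  apply rsum_ext; intros; rewrite cprev_cnext; auto.
Qed.

Lemma rsum_cnext_swap (n : nat) (u x : nat -> R) : (1 <= n)%nat ->
  rsum (fun i => u i * x (cnext n i)) n = rsum (fun i => x i * u (cprev n i)) n.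
Proof.
  intros Hn. rewrite <- (rsum_cnext n (fun j => x j * u (cprev n j))) by auto.
  apply rsum_ext; intros; rewrite cprev_cnext; auto; ring.
Qed.

Definition dot (n : nat) (x y : nat -> R) : R := rsum (fun i => x i * y i) n.

Lemma dot_comm (n : nat) (x y : nat -> R) : dot n x y = dot n y x.
Proof. apply rsum_ext; intros; ring. Qed.

Lemma dot_nonneg (n : nat) (x : nat -> R) : 0 <= dot n x x.
Proof. apply rsum_nonneg; intros; apply Rle_0_sqr. Qed.

Lemma dot_term_le (n : nat) (x : nat -> R) (i : nat) : (i < n)%nat -> x i * x i <= dot n x x.
Proof. intros Hi. apply (rsum_term_le (fun i => x i * x i)); auto; intros; apply Rle_0_sqr. Qed.

Lemma dot_affine (n : nat) (p q y z : nat -> R) (a k : R) :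
  (forall i, (i < n)%nat -> p i = q i + a - k * y i) ->
  dot n p z = dot n q z + a * rsum z n - k * dot n y z.
Proof.
  intros Hp. unfold dot.
  rewrite (rsum_ext _ (fun i => q i * z i + (a * z i + (- k) * (y i * z i))))
    by (intros; rewrite Hp by auto; ring).
  rewrite !rsum_plus, !rsum_scal. ring.
Qed.

Lemma dot_scaled (n : nat) (p y z : nat -> R) (k : R) :
  (forall i, (i < n)%nat -> p i = k * y i) -> dot n p z = k * dot n y z.
Proof.
  intros Hp. unfold dot. rewrite <- rsum_scal.
  apply rsum_ext; intros; rewrite Hp by auto; ring.
Qed.

Lemma dot_young (n : nat) (x y : nat -> R) (c : R) : c > 0 ->
  dot n x y <= c * dot n x x + / (4 * c) * dot n y y.
Proof.
  intros Hc. unfold dot. rewrite <- !rsum_scal, <- rsum_plus. apply rsum_le. intros i _.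
  assert (0 <= (2 * c * x i - y i) * (2 * c * x i - y i)) by apply Rle_0_sqr.
  assert (0 < / (4 * c)) by (apply Rinv_0_lt_compat; lra).
  assert (c * (x i * x i) + / (4 * c) * (y i * y i) - x i * y i
          = / (4 * c) * ((2 * c * x i - y i) * (2 * c * x i - y i))) by (field; lra).
  nra.
Qed.

Lemma dot_abs_le (n : nat) (x y : nat -> R) :
  Rabs (dot n x y) <= / 2 * dot n x x + / 2 * dot n y y.
Proof.
  assert (Hy := dot_young n x y (/ 2) ltac:(lra)).
  assert (Hny := dot_young n (fun i => - x i) y (/ 2) ltac:(lra)).
  replace (dot n (fun i => - x i) y) with (-1 * dot n x y) in Hny
    by (unfold dot; rewrite <- rsum_scal; apply rsum_ext; intros; ring).
  replace (dot n (fun i => - x i) (fun i => - x i)) with (dot n x x) in Hny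
    by (apply rsum_ext; intros; ring).
  replace (/ (4 * / 2)) with (/ 2) in * by field.
  apply Rabs_le; lra.
Qed.

(* Half the Laplacian of the cycle graph on n vertices:
   (L x)_i = x_i - (x_(i+1) + x_(i-1)) / 2, indices taken modulo n. *)
Definition cyc_lap (n : nat) (x : nat -> R) (i : nat) : R :=
  x i - (x (cnext n i) + x (cprev n i)) / 2.

Lemma cyc_lap_sum (n : nat) (x : nat -> R) : (1 <= n)%nat -> rsum (cyc_lap n x) n = 0.
Proof.
  intros Hn. unfold cyc_lap.
  rewrite (rsum_ext _ (fun i => x i + ((-1/2) * x (cnext n i) + (-1/2) * x (cprev n i))))
    by (intros; field).
  rewrite !rsum_plus, !rsum_scal, (rsum_cnext n x), (rsum_cprev n x) by auto. lra.
Qed.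

Lemma cyc_lap_symm (n : nat) (u x : nat -> R) : (1 <= n)%nat ->
  dot n u (cyc_lap n x) = dot n x (cyc_lap n u).
Proof.
  intros Hn. unfold dot, cyc_lap.
  rewrite (rsum_ext (fun i => u i * _) (fun i => u i * x i + ((-1/2) * (u i * x (cnext n i))
             + (-1/2) * (u i * x (cprev n i))))) by (intros; field).
  rewrite (rsum_ext (fun i => x i * _) (fun i => u i * x i + ((-1/2) * (x i * u (cnext n i))
             + (-1/2) * (x i * u (cprev n i))))) by (intros; field).
  rewrite !rsum_plus, !rsum_scal, (rsum_cnext_swap n u x), (rsum_cnext_swap n x u) by auto.
  lra.
Qed.

Lemma cyc_lap_shift (n : nat) (x : nat -> R) (m : R) (i : nat) :
  cyc_lap n (fun j => x j - m) i = cyc_lap n x i.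
Proof. unfold cyc_lap; field. Qed.

Definition cyc_diff (n : nat) (x : nat -> R) (i : nat) : R := x (cnext n i) - x i.

Lemma cyc_diff_sum (n : nat) (x : nat -> R) : (1 <= n)%nat -> rsum (cyc_diff n x) n = 0.
Proof.
  intros Hn. unfold cyc_diff.
  rewrite (rsum_ext _ (fun i => x (cnext n i) + (-1) * x i)) by (intros; ring).
  rewrite rsum_plus, rsum_scal, rsum_cnext by auto. lra.
Qed.

Lemma cyc_energy_diff (n : nat) (x : nat -> R) : (1 <= n)%nat ->
  dot n x (cyc_lap n x) = / 2 * dot n (cyc_diff n x) (cyc_diff n x).
Proof.
  intros Hn. unfold dot, cyc_lap, cyc_diff.
  rewrite (rsum_ext (fun i => x i * _) (fun i => x i * x i + ((-1/2) * (x i * x (cnext n i))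
             + (-1/2) * (x i * x (cprev n i))))) by (intros; field).
  rewrite (rsum_ext (fun i => (_ - _) * _) (fun i => (fun j => x j * x j) (cnext n i)
             + ((-2) * (x i * x (cnext n i)) + x i * x i))) by (intros; simpl; ring).
  rewrite !rsum_plus, !rsum_scal, (rsum_cnext n (fun j => x j * x j)), <- (rsum_cnext_swap n x x)
    by auto.
  lra.
Qed.

Lemma cyc_energy_nonneg (n : nat) (x : nat -> R) : (1 <= n)%nat -> 0 <= dot n x (cyc_lap n x).
Proof. intros Hn. rewrite cyc_energy_diff by auto. pose proof (dot_nonneg n (cyc_diff n x)). lra. Qed.

Lemma cyc_lap_sq_le (n : nat) (x : nat -> R) : (1 <= n)%nat ->
  dot n (cyc_lap n x) (cyc_lap n x) <= 2 * dot n x (cyc_lap n x).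
Proof.
  intros Hn. rewrite cyc_energy_diff by auto. set (d := cyc_diff n x).
  assert (Hpt : forall i, (i < n)%nat ->
            cyc_lap n x i * cyc_lap n x i <= / 2 * (d (cprev n i) * d (cprev n i)) + / 2 * (d i * d i)).
  { intros i Hi. unfold d, cyc_diff, cyc_lap. rewrite cnext_cprev by auto.
    assert (0 <= (x (cnext n i) - x (cprev n i)) * (x (cnext n i) - x (cprev n i)))
      by apply Rle_0_sqr.
    nra. }
  unfold dot at 1. eapply Rle_trans; [apply (rsum_le _ _ _ Hpt)|].
  rewrite rsum_plus, !rsum_scal, (rsum_cprev n (fun j => d j * d j)) by auto.
  unfold dot; lra.
Qed.

Lemma sq_le_of_abs_le (y b : R) : Rabs y <= b -> y * y <= b * b.
Proof.
  intros H. pose proof (Rabs_pos y).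
  rewrite <- (Rabs_right (y * y)), Rabs_mult by nra. nra.
Qed.

Lemma abs_lt_of_sq_lt (y e : R) : 0 < e -> y * y < e * e -> Rabs y < e.
Proof. intros He H. destruct (Rcase_abs y); [rewrite Rabs_left | rewrite Rabs_right]; nra. Qed.

(* A zero-sum vector whose consecutive increments are at most B is bounded by 2 n B:
   every entry is within n B of the first one, and the zero sum pins the first one. *)
Lemma zero_sum_bounded_increments (m : nat) (z : nat -> R) (B : R) :
  0 <= B -> rsum z m = 0 ->
  (forall i, (S i < m)%nat -> Rabs (z (S i) - z i) <= B) ->
  forall i, (i < m)%nat -> Rabs (z i) <= 2 * INR m * B.
Proof.
  intros HB Hsum Hinc.
  assert (Hdrift : forall i, (i < m)%nat -> Rabs (z i - z O) <= INR i * B).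
  { induction i as [|i IH]; intros Hi.
    - replace (z O - z O) with 0 by ring. rewrite Rabs_R0. simpl; lra.
    - replace (z (S i) - z O) with ((z (S i) - z i) + (z i - z O)) by ring.
      rewrite S_INR. eapply Rle_trans; [apply Rabs_triang|].
      specialize (IH ltac:(lia)). specialize (Hinc i Hi). lra. }
  assert (Hdrift' : forall i, (i < m)%nat -> Rabs (z i - z O) <= INR m * B).
  { intros i Hi. eapply Rle_trans; [apply Hdrift; auto|].
    apply Rmult_le_compat_r; auto. apply le_INR; lia. }
  intros i Hi.
  assert (Hz0 : INR m * Rabs (z O) <= INR m * (INR m * B)).
  { assert (E : INR m * z O = rsum (fun j => - (z j - z O)) m).
    { rewrite (rsum_ext _ (fun j => z O + (-1) * z j)) by (intros; ring).
      rewrite rsum_plus, rsum_scal, rsum_const, Hsum. ring. }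
    rewrite <- (Rabs_right (INR m)) at 1 by (apply Rle_ge, pos_INR).
    rewrite <- Rabs_mult, E, <- rsum_const.
    eapply Rle_trans; [apply rsum_abs|]. apply rsum_le.
    intros j Hj. rewrite Rabs_Ropp. apply Hdrift'; auto. }
  assert (Hm : 0 < INR m) by (apply lt_0_INR; lia).
  apply Rmult_le_reg_l in Hz0; auto.
  replace (z i) with ((z i - z O) + z O) by ring.
  eapply Rle_trans; [apply Rabs_triang|]. specialize (Hdrift' i Hi). lra.
Qed.

Definition poincare_const (n : nat) : R := 64 * INR n ^ 5.

Lemma poincare_const_pos (n : nat) : (1 <= n)%nat -> 0 < poincare_const n.
Proof.
  intros Hn. unfold poincare_const. assert (0 < INR n) by (apply lt_0_INR; lia).
  assert (0 < INR n ^ 5) by (apply pow_lt; lra). lra.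
Qed.

(* Discrete Poincare inequality on the cycle: for zero-sum x, |x|^2 <= C_n |L x|^2.
   Apply [zero_sum_bounded_increments] to Dx (whose increments are -2 L x),
   then to x (whose increments are Dx). *)
Lemma cyc_poincare (n : nat) (x : nat -> R) : (1 <= n)%nat -> rsum x n = 0 ->
  dot n x x <= poincare_const n * dot n (cyc_lap n x) (cyc_lap n x).
Proof.
  intros Hn Hsum. set (W := dot n (cyc_lap n x) (cyc_lap n x)).
  set (s := sqrt W). set (N := INR n). set (d := cyc_diff n x).
  assert (HW : 0 <= W) by apply dot_nonneg.
  assert (Hs : 0 <= s) by apply sqrt_pos.
  assert (HN : 1 <= N) by (apply (le_INR 1); auto).
  assert (Hlap : forall i, (i < n)%nat -> Rabs (cyc_lap n x i) <= s).
  { intros i Hi. rewrite <- sqrt_Rsqr_abs. apply sqrt_le_1_alt. apply dot_term_le; auto. }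
  assert (Hd : forall i, (i < n)%nat -> Rabs (d i) <= 2 * N * (2 * s)).
  { apply zero_sum_bounded_increments; [lra | apply cyc_diff_sum; auto |].
    intros i Hi. replace (d (S i) - d i) with (-2 * cyc_lap n x (S i)).
    - rewrite Rabs_mult, Rabs_left by lra. specialize (Hlap (S i) Hi). lra.
    - unfold d, cyc_diff, cyc_lap. rewrite cprev_succ, (cnext_inner n i Hi). field. }
  assert (Hx : forall i, (i < n)%nat -> Rabs (x i) <= 2 * N * (2 * N * (2 * s))).
  { apply zero_sum_bounded_increments; auto; [nra|].
    intros i Hi. replace (x (S i) - x i) with (d i).
    - apply Hd; lia.
    - unfold d, cyc_diff. rewrite cnext_inner; auto. }
  unfold dot at 1. eapply Rle_trans.
  - apply (rsum_le _ (fun _ => 64 * N ^ 4 * W)). intros i Hi.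
    pose proof (sq_le_of_abs_le _ _ (Hx i Hi)) as Hxi. unfold s in Hxi.
    replace (2 * N * (2 * N * (2 * sqrt W)) * (2 * N * (2 * N * (2 * sqrt W))))
      with (64 * N ^ 4 * (sqrt W * sqrt W)) in Hxi by ring.
    rewrite sqrt_sqrt in Hxi; auto.
  - rewrite rsum_const. unfold poincare_const. fold N. lra.
Qed.

(* The energy is controlled by |L x|^2; reduce to zero-sum x by subtracting the mean,
   which changes neither side. *)
Lemma cyc_energy_le (n : nat) (x : nat -> R) : (1 <= n)%nat ->
  dot n x (cyc_lap n x) <= (poincare_const n + 1) / 2 * dot n (cyc_lap n x) (cyc_lap n x).
Proof.
  intros Hn. assert (HN : 0 < INR n) by (apply lt_0_INR; lia).
  set (z := fun i => x i - rsum x n / INR n).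
  assert (Hz : rsum z n = 0).
  { unfold z. rewrite (rsum_ext _ (fun i => x i + (-1) * (rsum x n / INR n))) by (intros; ring).
    rewrite rsum_plus, rsum_const. field. lra. }
  assert (Hlz : forall y, dot n y (cyc_lap n z) = dot n y (cyc_lap n x))
    by (intros; apply rsum_ext; intros; unfold z; rewrite cyc_lap_shift; auto).
  assert (E : dot n x (cyc_lap n x) = dot n z (cyc_lap n z)).
  { rewrite Hlz, (dot_affine n z x (fun _ => 0) (cyc_lap n x) (- (rsum x n / INR n)) 0)
      by (intros; unfold z; ring).
    rewrite cyc_lap_sum by auto. ring. }
  rewrite E. eapply Rle_trans; [apply Rle_abs | eapply Rle_trans; [apply dot_abs_le|]].
  assert (Hp := cyc_poincare n z Hn Hz).
  assert (Hll : dot n (cyc_lap n z) (cyc_lap n z) = dot n (cyc_lap n x) (cyc_lap n x))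
    by (rewrite Hlz, dot_comm, Hlz; reflexivity).
  rewrite Hll in *. lra.
Qed.

Section Lyapunov.

Variables (n : nat) (kphi komega eps : R).
Hypotheses (hn : (1 <= n)%nat) (hkphi : 0 < kphi) (hkomega : 0 < komega)
  (heps0 : 0 < eps) (heps1 : eps <= 1).

Definition lyap (p q : nat -> R) : R :=
  komega * dot n p (cyc_lap n p) + dot n q q - eps * dot n q (cyc_lap n p).

Definition lyap_rate (p q p' q' : nat -> R) : R :=
  komega * (dot n p' (cyc_lap n p) + dot n p (cyc_lap n p')) + (dot n q' q + dot n q q')
  - eps * (dot n q' (cyc_lap n p) + dot n q (cyc_lap n p')).

Definition lyap_decay_rate : R :=
  Rmin (komega * kphi / (komega * ((poincare_const n + 1) / 2) + 1))
       (eps / (8 * poincare_const n)).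

Lemma lyap_decay_rate_pos : 0 < lyap_decay_rate.
Proof.
  pose proof (poincare_const_pos n hn).
  unfold lyap_decay_rate. apply Rmin_glb_lt; apply Rdiv_lt_0_compat; nra.
Qed.

(* V dominates |L p|^2 and |q|^2, using |L p|^2 <= 2 <p, L p> and Young. *)
Lemma lyap_lower (p q : nat -> R) : eps <= komega / 2 ->
  komega / 4 * dot n (cyc_lap n p) (cyc_lap n p) + / 2 * dot n q q <= lyap p q.
Proof.
  intros heps2. unfold lyap.
  pose proof (cyc_lap_sq_le n p hn). pose proof (dot_nonneg n q).
  pose proof (dot_nonneg n (cyc_lap n p)).
  assert (Hc := Rle_trans _ _ _ (Rle_abs _) (dot_abs_le n q (cyc_lap n p))).
  assert (eps * dot n q (cyc_lap n p)
          <= eps * (/ 2 * dot n q q + / 2 * dot n (cyc_lap n p) (cyc_lap n p)))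
    by (apply Rmult_le_compat_l; lra).
  nra.
Qed.

Lemma lyap_upper (p q : nat -> R) : rsum q n = 0 ->
  lyap p q <= (komega * ((poincare_const n + 1) / 2) + 1) * dot n (cyc_lap n p) (cyc_lap n p)
              + 4 * poincare_const n * dot n q (cyc_lap n q).
Proof.
  intros Hq. unfold lyap. set (K := poincare_const n).
  pose proof (poincare_const_pos n hn). pose proof (dot_nonneg n q).
  pose proof (dot_nonneg n (cyc_lap n p)). pose proof (cyc_energy_nonneg n q hn).
  pose proof (cyc_energy_le n p hn) as Hp.
  pose proof (cyc_poincare n q hn Hq) as Hpq. pose proof (cyc_lap_sq_le n q hn).
  pose proof (dot_abs_le n q (cyc_lap n p)).
  assert (- dot n q (cyc_lap n p) <= Rabs (dot n q (cyc_lap n p)))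
    by (rewrite <- Rabs_Ropp; apply Rle_abs).
  assert (eps * - dot n q (cyc_lap n p)
          <= eps * (/ 2 * dot n q q + / 2 * dot n (cyc_lap n p) (cyc_lap n p)))
    by (apply Rmult_le_compat_l; lra).
  fold K in Hp, Hpq. assert (0 < K) by (unfold K; lra).
  assert (komega * dot n p (cyc_lap n p)
          <= komega * ((K + 1) / 2 * dot n (cyc_lap n p) (cyc_lap n p)))
    by (apply Rmult_le_compat_l; lra).
  assert (eps * (/ 2 * dot n q q + / 2 * dot n (cyc_lap n p) (cyc_lap n p))
          <= 1 * (/ 2 * dot n q q + / 2 * dot n (cyc_lap n p) (cyc_lap n p)))
    by (apply Rmult_le_compat_r; lra).
  assert (K * dot n (cyc_lap n q) (cyc_lap n q) <= K * (2 * dot n q (cyc_lap n q)))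
    by (apply Rmult_le_compat_l; lra).
  lra.
Qed.

Lemma lyap_rate_bound (a : R) (p q p' q' : nat -> R) :
  eps * (komega + kphi * kphi) <= komega * kphi ->
  (forall i, (i < n)%nat -> p' i = q i + a - kphi * cyc_lap n p i) ->
  (forall i, (i < n)%nat -> q' i = - komega * cyc_lap n p i) ->
  lyap_rate p q p' q'
    <= - (komega * kphi) * dot n (cyc_lap n p) (cyc_lap n p) - eps / 2 * dot n q (cyc_lap n q).
Proof.
  intros Hgain Hp' Hq'. unfold lyap_rate.
  pose proof (cyc_lap_sq_le n q hn). pose proof (dot_nonneg n (cyc_lap n p)).
  set (Y := dot n (cyc_lap n p) (cyc_lap n p)) in *. set (E := dot n q (cyc_lap n q)) in *.
  set (Z := dot n (cyc_lap n p) (cyc_lap n q)).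
  rewrite (cyc_lap_symm n p p'), (cyc_lap_symm n q p'), (dot_comm n q q') by auto.
  rewrite !(dot_affine n p' q (cyc_lap n p) _ a kphi Hp'), !(dot_scaled n q' (cyc_lap n p) _ _ Hq').
  rewrite !cyc_lap_sum, (dot_comm n (cyc_lap n p) q) by auto. fold Y E Z.
  assert (HZ : Z <= kphi * Y + / (4 * kphi) * dot n (cyc_lap n q) (cyc_lap n q))
    by (apply dot_young; auto).
  assert (eps * kphi * Z <= eps * kphi * (kphi * Y + / (4 * kphi) * (2 * E))).
  { apply Rmult_le_compat_l; [nra|].
    assert (/ (4 * kphi) * dot n (cyc_lap n q) (cyc_lap n q) <= / (4 * kphi) * (2 * E))
      by (apply Rmult_le_compat_l; [left; apply Rinv_0_lt_compat|]; lra).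
    lra. }
  assert (eps * kphi * (kphi * Y + / (4 * kphi) * (2 * E)) = eps * kphi * kphi * Y + eps / 2 * E)
    by (field; lra).
  assert (eps * (komega + kphi * kphi) * Y <= komega * kphi * Y) by (apply Rmult_le_compat_r; lra).
  nra.
Qed.

Lemma lyap_decay (a : R) (p q p' q' : nat -> R) :
  eps * (komega + kphi * kphi) <= komega * kphi -> rsum q n = 0 ->
  (forall i, (i < n)%nat -> p' i = q i + a - kphi * cyc_lap n p i) ->
  (forall i, (i < n)%nat -> q' i = - komega * cyc_lap n p i) ->
  lyap_rate p q p' q' <= - lyap_decay_rate * lyap p q.
Proof.
  intros Hgain Hq Hp' Hq'.
  pose proof (lyap_rate_bound a p q p' q' Hgain Hp' Hq') as Hrate.
  pose proof (lyap_upper p q Hq) as Hup.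
  pose proof (lyap_decay_rate_pos) as Hc. pose proof (poincare_const_pos n hn).
  pose proof (dot_nonneg n (cyc_lap n p)). pose proof (cyc_energy_nonneg n q hn).
  set (A := komega * ((poincare_const n + 1) / 2) + 1) in *.
  set (c := lyap_decay_rate) in *.
  assert (HA : 0 < A) by (unfold A; nra).
  assert (Hc1 : c * A <= komega * kphi).
  { assert (c <= komega * kphi / A) by apply Rmin_l.
    assert (komega * kphi / A * A = komega * kphi) by (field; lra). nra. }
  assert (Hc2 : c * (4 * poincare_const n) <= eps / 2).
  { assert (c <= eps / (8 * poincare_const n)) by apply Rmin_r.
    assert (eps / (8 * poincare_const n) * (4 * poincare_const n) = eps / 2) by (field; lra).
    nra. }
  assert (c * lyap p q <= c * (A * dot n (cyc_lap n p) (cyc_lap n p)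
                               + 4 * poincare_const n * dot n q (cyc_lap n q)))
    by (apply Rmult_le_compat_l; lra).
  nra.
Qed.

End Lyapunov.

Lemma derivable_pt_lim_rsum (F : nat -> R -> R) (F' : nat -> R) (t : R) (m : nat) :
  (forall i, (i < m)%nat -> derivable_pt_lim (F i) t (F' i)) ->
  derivable_pt_lim (fun s => rsum (fun i => F i s) m) t (rsum F' m).
Proof.
  induction m as [|m IH]; intros H; simpl.
  - apply derivable_pt_lim_const.
  - apply derivable_pt_lim_plus; [apply IH; intros; apply H | apply H]; lia.
Qed.

Lemma derivable_pt_lim_dot (n : nat) (X Y : R -> nat -> R) (X' Y' : nat -> R) (t : R) :
  (forall i, (i < n)%nat -> derivable_pt_lim (fun s => X s i) t (X' i)) ->
  (forall i, (i < n)%nat -> derivable_pt_lim (fun s => Y s i) t (Y' i)) ->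
  derivable_pt_lim (fun s => dot n (X s) (Y s)) t (dot n X' (Y t) + dot n (X t) Y').
Proof.
  intros HX HY. unfold dot. rewrite <- rsum_plus.
  apply (derivable_pt_lim_rsum (fun i s => X s i * Y s i)). intros i Hi.
  apply (derivable_pt_lim_mult (fun s => X s i) (fun s => Y s i)); auto.
Qed.

Lemma derivable_pt_lim_cyc_lap (n : nat) (X : R -> nat -> R) (X' : nat -> R) (t : R) (i : nat) :
  (i < n)%nat ->
  (forall j, (j < n)%nat -> derivable_pt_lim (fun s => X s j) t (X' j)) ->
  derivable_pt_lim (fun s => cyc_lap n (X s) i) t (cyc_lap n X' i).
Proof.
  intros Hi H. unfold cyc_lap. apply derivable_pt_lim_minus; [apply H; auto|].
  replace ((X' (cnext n i) + X' (cprev n i)) / 2)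
    with (/ 2 * (X' (cnext n i) + X' (cprev n i))) by (unfold Rdiv; ring).
  apply (derivable_pt_lim_ext (fun s => / 2 * (X s (cnext n i) + X s (cprev n i))));
    [intros; unfold Rdiv; ring|].
  apply derivable_pt_lim_scal.
  apply derivable_pt_lim_plus; apply H; [apply cnext_lt | apply cprev_lt]; auto.
Qed.

Lemma derivable_pt_lim_lyap (n : nat) (komega eps : R) (P Q : R -> nat -> R)
    (P' Q' : nat -> R) (t : R) :
  (forall i, (i < n)%nat -> derivable_pt_lim (fun s => P s i) t (P' i)) ->
  (forall i, (i < n)%nat -> derivable_pt_lim (fun s => Q s i) t (Q' i)) ->
  derivable_pt_lim (fun s => lyap n komega eps (P s) (Q s)) t
    (lyap_rate n komega eps (P t) (Q t) P' Q').
Proof.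
  intros HP HQ.
  assert (HLP : forall i, (i < n)%nat ->
            derivable_pt_lim (fun s => cyc_lap n (P s) i) t (cyc_lap n P' i))
    by (intros; apply derivable_pt_lim_cyc_lap; auto).
  unfold lyap, lyap_rate.
  apply derivable_pt_lim_minus; [apply derivable_pt_lim_plus|];
    try apply (derivable_pt_lim_scal (fun s => dot n _ _));
    apply derivable_pt_lim_dot; auto.
Qed.

Lemma mvt_upper_bound (f f' : R -> R) (a b K : R) : a <= b ->
  (forall x, a <= x <= b -> derivable_pt_lim f x (f' x)) ->
  (forall x, a <= x <= b -> f' x <= K) -> f b - f a <= K * (b - a).
Proof.
  intros Hab Hd HK. destruct (Req_dec a b) as [->|Hne]; [lra|].
  destruct (MVT_cor2 f f' a b ltac:(lra) Hd) as [c [E Hc]]. rewrite E.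
  apply Rmult_le_compat_r; [lra|]. apply HK; lra.
Qed.

(* A nonnegative V with V' <= - c V (c > 0) on [t1, +oo) tends to 0: V is nonincreasing,
   and while V >= eps it decreases at rate at least c eps. *)
Lemma decay_to_zero (V V' : R -> R) (t1 c : R) : 0 < c ->
  (forall t, t >= t1 -> derivable_pt_lim V t (V' t)) -> (forall t, t >= t1 -> 0 <= V t) ->
  (forall t, t >= t1 -> V' t <= - c * V t) ->
  forall eps, eps > 0 -> exists T, forall t, t >= T -> V t < eps.
Proof.
  intros Hc Hd Hpos Hrate eps He.
  assert (HV1 : 0 <= V t1) by (apply Hpos; lra).
  assert (Hq : 0 <= V t1 / (c * eps))
    by (unfold Rdiv; apply Rmult_le_pos; [auto | left; apply Rinv_0_lt_compat; nra]).
  exists (t1 + V t1 / (c * eps) + 1). intros t Ht.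
  destruct (Rlt_dec (V t) eps) as [|Hge]; auto. exfalso.
  assert (Hmono : forall s, t1 <= s <= t -> V t <= V s).
  { intros s Hs. assert (V t - V s <= 0 * (t - s)).
    { apply (mvt_upper_bound V V'); try lra; [intros; apply Hd; lra|].
      intros x Hx. specialize (Hrate x ltac:(lra)). specialize (Hpos x ltac:(lra)). nra. }
    lra. }
  assert (V t - V t1 <= (- c * eps) * (t - t1)).
  { apply (mvt_upper_bound V V'); try lra; [intros; apply Hd; lra|].
    intros x Hx. specialize (Hrate x ltac:(lra)). specialize (Hmono x Hx). nra. }
  assert (c * eps * (t - t1) >= c * eps * (V t1 / (c * eps) + 1))
    by (apply Rle_ge, Rmult_le_compat_l; nra).
  assert (c * eps * (V t1 / (c * eps) + 1) = V t1 + c * eps) by (field; lra).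
  assert (0 <= V t) by (apply Hpos; lra). nra.
Qed.

Lemma rsum_right_cont (F : nat -> R -> R) (t0 : R) (m : nat) :
  (forall i, (i < m)%nat -> right_cont_at (F i) t0) ->
  right_cont_at (fun t => rsum (fun i => F i t) m) t0.
Proof.
  induction m as [|m IH]; intros H eps He; simpl.
  - exists 1. split; [lra|]. intros. rewrite Rminus_0_r, Rabs_R0; lra.
  - destruct (IH ltac:(intros; apply H; lia) (eps / 2) ltac:(lra)) as [d1 [Hd1 H1]].
    destruct (H m ltac:(lia) (eps / 2) ltac:(lra)) as [d2 [Hd2 H2]].
    exists (Rmin d1 d2). split; [apply Rmin_glb_lt; auto|].
    intros t Ht. pose proof (Rmin_l d1 d2). pose proof (Rmin_r d1 d2).
    specialize (H1 t ltac:(lra)). specialize (H2 t ltac:(lra)).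
    replace (rsum (fun i => F i t) m + F m t - (rsum (fun i => F i t0) m + F m t0))
      with ((rsum (fun i => F i t) m - rsum (fun i => F i t0) m) + (F m t - F m t0)) by ring.
    eapply Rle_lt_trans; [apply Rabs_triang | lra].
Qed.

Lemma zero_after_start (F : R -> R) (t0 : R) : right_cont_at F t0 -> F t0 = 0 ->
  (forall t, t > t0 -> derivable_pt_lim F t 0) -> forall t, t > t0 -> F t = 0.
Proof.
  intros Hrc H0 Hd t Ht. destruct (Req_dec (F t) 0) as [|Hne]; auto. exfalso.
  destruct (Hrc (Rabs (F t)) ltac:(apply Rabs_pos_lt; auto)) as [d [Hd0 Hnear]].
  set (s := t0 + Rmin d (t - t0) / 2).
  assert (Rmin d (t - t0) > 0) by (apply Rmin_glb_lt; lra).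
  pose proof (Rmin_l d (t - t0)). pose proof (Rmin_r d (t - t0)).
  assert (Hs : F t = F s).
  { destruct (MVT_cor2 F (fun _ => 0) s t ltac:(unfold s; lra)) as [c [E _]].
    - intros; apply Hd; unfold s in *; lra.
    - lra. }
  specialize (Hnear s ltac:(unfold s; lra)). rewrite H0, Rminus_0_r, <- Hs in Hnear. lra.
Qed.

(* The cross weight of the Lyapunov function, small enough for [lyap_lower] and
   [lyap_rate_bound]. *)
Definition lyap_weight (kphi komega : R) : R :=
  Rmin (Rmin (komega * kphi / (komega + kphi * kphi)) (komega / 2)) 1.

Lemma lyap_weight_spec (kphi komega : R) : 0 < kphi -> 0 < komega ->
  0 < lyap_weight kphi komega /\ lyap_weight kphi komega <= 1 /\
  lyap_weight kphi komega <= komega / 2 /\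
  lyap_weight kphi komega * (komega + kphi * kphi) <= komega * kphi.
Proof.
  intros Hkp Hko. unfold lyap_weight.
  set (r := komega * kphi / (komega + kphi * kphi)).
  assert (Hr : r * (komega + kphi * kphi) = komega * kphi) by (unfold r; field; nra).
  assert (0 < r) by (unfold r; apply Rdiv_lt_0_compat; nra).
  pose proof (Rmin_l (Rmin r (komega / 2)) 1). pose proof (Rmin_r (Rmin r (komega / 2)) 1).
  pose proof (Rmin_l r (komega / 2)). pose proof (Rmin_r r (komega / 2)).
  repeat split; try lra.
  - apply Rmin_glb_lt; [apply Rmin_glb_lt|]; lra.
  - assert (0 < komega + kphi * kphi) by nra.
    apply Rle_trans with (r * (komega + kphi * kphi)); [apply Rmult_le_compat_r|]; lra.
Qed.

Theorem error_system_decay (n : nat) (kphi komega a t1 : R) (P Q : R -> nat -> R) :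
  (1 <= n)%nat -> 0 < kphi -> 0 < komega ->
  (forall t j, t > t1 -> (j < n)%nat ->
     derivable_pt_lim (fun s => P s j) t (Q t j + a - kphi * cyc_lap n (P t) j)) ->
  (forall t j, t > t1 -> (j < n)%nat ->
     derivable_pt_lim (fun s => Q s j) t (- komega * cyc_lap n (P t) j)) ->
  (forall t, t > t1 -> rsum (Q t) n = 0) ->
  forall e, e > 0 -> exists T, T > t1 /\ forall t, t >= T -> forall j, (j < n)%nat ->
    Rabs (cyc_lap n (P t) j) < e /\ Rabs (Q t j) < e.
Proof.
  intros Hn Hkp Hko HdP HdQ HQ e He.
  destruct (lyap_weight_spec kphi komega Hkp Hko) as (Hw0 & Hw1 & Hw2 & Hw3).
  set (eps := lyap_weight kphi komega) in *.
  set (V := fun t => lyap n komega eps (P t) (Q t)).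
  set (V' := fun t => lyap_rate n komega eps (P t) (Q t)
               (fun j => Q t j + a - kphi * cyc_lap n (P t) j)
               (fun j => - komega * cyc_lap n (P t) j)).
  assert (Hlow : forall t, komega / 4 * dot n (cyc_lap n (P t)) (cyc_lap n (P t))
                           + / 2 * dot n (Q t) (Q t) <= V t)
    by (intros; apply lyap_lower; auto).
  assert (Hdecay : forall d, d > 0 -> exists T, forall t, t >= T -> V t < d).
  { apply (decay_to_zero V V' (t1 + 1) (lyap_decay_rate n kphi komega eps));
      [apply lyap_decay_rate_pos; auto | | |].
    - intros t Ht. apply derivable_pt_lim_lyap; intros; [apply HdP | apply HdQ]; auto; lra.
    - intros t _. pose proof (Hlow t). pose proof (dot_nonneg n (cyc_lap n (P t))).
      pose proof (dot_nonneg n (Q t)). nra.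
    - intros t Ht. apply (lyap_decay n kphi komega eps Hn Hkp Hko Hw0 Hw1 a); auto; apply HQ; lra. }
  assert (He2 : 0 < e * e) by nra.
  destruct (Hdecay (Rmin (komega / 4 * (e * e)) (/ 2 * (e * e)))) as [T HT];
    [apply Rmin_glb_lt; [apply Rmult_lt_0_compat|]; lra|].
  exists (Rmax T (t1 + 1)). split; [pose proof (Rmax_r T (t1 + 1)); lra|].
  intros t Ht j Hj. pose proof (Rmax_l T (t1 + 1)).
  specialize (HT t ltac:(lra)). specialize (Hlow t).
  pose proof (Rmin_l (komega / 4 * (e * e)) (/ 2 * (e * e))).
  pose proof (Rmin_r (komega / 4 * (e * e)) (/ 2 * (e * e))).
  pose proof (dot_term_le n (cyc_lap n (P t)) j Hj). pose proof (dot_term_le n (Q t) j Hj).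
  pose proof (dot_nonneg n (cyc_lap n (P t))). pose proof (dot_nonneg n (Q t)).
  split; apply abs_lt_of_sq_lt; nra.
Qed.

(* Offset of the phases from the splay state 2 pi j / n. *)
Definition phase_offset (n : nat) (phis : nat -> R) (j : nat) : R :=
  phis j - 2 * PI * INR j / INR n.

(* The consensus error of Controller 3 is the cycle Laplacian of the splay offsets: the 2 pi
   wrap-around in phibar is exactly absorbed by the offsets 2 pi j / n. *)
Lemma phibar_cyc_lap (n : nat) (phis : nat -> R) (i : nat) : (2 <= n)%nat -> (i < n)%nat ->
  phis i - phibar n phis i = cyc_lap n (phase_offset n phis) i.
Proof.
  intros Hn Hi. assert (HN : 2 <= INR n) by (apply (le_INR 2); auto).
  unfold phibar, cyc_lap, phase_offset, cnext, cprev.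
  destruct (Nat.eqb_spec i 0) as [->|Hi0].
  - destruct (Nat.eqb_spec 1 n); [lia|]. rewrite minus_INR by lia. simpl INR. field. lra.
  - destruct (Nat.eqb_spec i (n - 1)) as [->|Hin].
    + replace (S (n - 1)) with n by lia. rewrite Nat.eqb_refl.
      replace (n - 1 - 1)%nat with (n - 2)%nat by lia.
      rewrite !minus_INR by lia. simpl INR. field. lra.
    + destruct (Nat.eqb_spec (S i) n); [lia|]. rewrite S_INR, minus_INR by lia.
      replace (i + 1)%nat with (S i) by lia. rewrite S_INR. simpl INR. field. lra.
Qed.

(* In the coordinates P = phase offsets and Q_j = omega_j + xi_j - a, Controller 3 reads
   P' = Q + a - kphi L P and Q' = - komega L P. *)
Lemma phase_offset_deriv (n : nat) (kphi a t : R) (xi : nat -> R) (phi omega : nat -> R -> R)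
    (j : nat) : (2 <= n)%nat -> (j < n)%nat ->
  derivable_pt_lim (phi j) t
    (omega j t + kphi * (phibar n (fun i => phi i t) j - phi j t) + xi j) ->
  derivable_pt_lim (fun s => phase_offset n (fun i => phi i s) j) t
    ((omega j t + xi j - a) + a - kphi * cyc_lap n (phase_offset n (fun i => phi i t)) j).
Proof.
  intros Hn Hj Hd. unfold phase_offset at 1.
  rewrite <- phibar_cyc_lap by auto.
  replace (omega j t + xi j - a + a - kphi * (phi j t - phibar n (fun i => phi i t) j))
    with (omega j t + kphi * (phibar n (fun i => phi i t) j - phi j t) + xi j - 0) by ring.
  apply derivable_pt_lim_minus; [exact Hd | apply derivable_pt_lim_const].
Qed.

Lemma rate_error_deriv (n : nat) (komega a t : R) (xi : nat -> R) (phi omega : nat -> R -> R)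
    (j : nat) : (2 <= n)%nat -> (j < n)%nat ->
  derivable_pt_lim (omega j) t (komega * (phibar n (fun i => phi i t) j - phi j t)) ->
  derivable_pt_lim (fun s => omega j s + xi j - a) t
    (- komega * cyc_lap n (phase_offset n (fun i => phi i t)) j).
Proof.
  intros Hn Hj Hd. rewrite <- phibar_cyc_lap by auto.
  replace (- komega * (phi j t - phibar n (fun i => phi i t) j))
    with (komega * (phibar n (fun i => phi i t) j - phi j t) + 0 - 0) by ring.
  apply derivable_pt_lim_minus; [apply derivable_pt_lim_plus; [exact Hd|] |];
    apply derivable_pt_lim_const.
Qed.

(* The total angular velocity is conserved: its derivative is - komega times the sum of the
   Laplacian, which vanishes, and it starts at 0. *)
Lemma omega_sum_zero (n : nat) (komega t0 : R) (phi omega : nat -> R -> R) :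
  (2 <= n)%nat ->
  (forall i, (i < n)%nat -> right_cont_at (omega i) t0) ->
  (forall i, (i < n)%nat -> omega i t0 = 0) ->
  (forall i t, (i < n)%nat -> t > t0 ->
     derivable_pt_lim (omega i) t (komega * (phibar n (fun j => phi j t) i - phi i t))) ->
  forall t, t > t0 -> rsum (fun j => omega j t) n = 0.
Proof.
  intros Hn Hrc Hinit Hd. apply zero_after_start.
  - apply (rsum_right_cont (fun j s => omega j s)); auto.
  - rewrite (rsum_ext _ (fun _ => 0)), rsum_const by auto. ring.
  - intros t Ht.
    replace 0 with (rsum (fun j => komega * (phibar n (fun j => phi j t) j - phi j t)) n).
    + apply (derivable_pt_lim_rsum (fun j s => omega j s)). intros; apply Hd; auto.
    + rewrite (rsum_ext _ (fun j => - komega * cyc_lap n (phase_offset n (fun i => phi i t)) j))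
        by (intros; rewrite <- phibar_cyc_lap by auto; ring).
      rewrite rsum_scal, cyc_lap_sum by lia. ring.
Qed.

(* The rate errors omega_j + xi_j - xi_k / n sum to zero: the omegas sum to 0 and the only
   nonzero drift is xi_k. *)
Lemma rate_error_sum_zero (n : nat) (komega : R) (xi : nat -> R) (k : nat) (t0 : R)
    (phi omega : nat -> R -> R) :
  (2 <= n)%nat -> (k < n)%nat -> (forall i, (i < n)%nat -> i <> k -> xi i = 0) ->
  (forall i, (i < n)%nat -> right_cont_at (omega i) t0) ->
  (forall i, (i < n)%nat -> omega i t0 = 0) ->
  (forall i t, (i < n)%nat -> t > t0 ->
     derivable_pt_lim (omega i) t (komega * (phibar n (fun j => phi j t) i - phi i t))) ->
  forall t, t > t0 -> rsum (fun j => omega j t + xi j - xi k / INR n) n = 0.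
Proof.
  intros Hn Hk Hxi Hrc Hinit Hd t Ht.
  rewrite (rsum_ext _ (fun j => omega j t + (xi j + (-1) * (xi k / INR n)))) by (intros; ring).
  rewrite !rsum_plus, rsum_scal, rsum_const, (rsum_single xi n k),
    (omega_sum_zero n komega t0 phi omega) by auto.
  field. apply not_0_INR; lia.
Qed.

Theorem corollary1
  (n : nat) (hn : (2 <= n)%nat)
  (kphi komega : R) (hkphi : kphi > 0) (hkomega : komega > 0)
  (xi : nat -> R) (k : nat) (hk : (k < n)%nat)
  (hxik : xi k > 0) (hxi : forall i : nat, (i < n)%nat -> i <> k -> xi i = 0)
  (t0 : R) (phi omega : nat -> R -> R)
  (hcphi : forall i : nat, (i < n)%nat -> right_cont_at (phi i) t0)
  (hcomega : forall i : nat, (i < n)%nat -> right_cont_at (omega i) t0)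
  (hinit : forall i : nat, (i < n)%nat -> omega i t0 = 0)
  (hdomega : forall (i : nat) (t : R), (i < n)%nat -> t > t0 ->
     derivable_pt_lim (omega i) t
       (komega * (phibar n (fun j => phi j t) i - phi i t)))
  (hdphi : forall (i : nat) (t : R), (i < n)%nat -> t > t0 ->
     derivable_pt_lim (phi i) t
       (omega i t + kphi * (phibar n (fun j => phi j t) i - phi i t) + xi i)) :
  forall i : nat, (i < n)%nat ->
    tends_at_infty (fun t => phi i t - phibar n (fun j => phi j t) i) 0 /\
    (forall eps : R, eps > 0 -> exists T : R, T > t0 /\
       forall (t l : R), t >= T -> derivable_pt_lim (phi i) t l ->
         Rabs (l - xi k / INR n) < eps).
Proof.
  intros i Hi.
  set (a := xi k / INR n).
  set (P := fun t => phase_offset n (fun j => phi j t)).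
  set (Q := fun t j => omega j t + xi j - a).
  assert (Herr : forall t, phi i t - phibar n (fun j => phi j t) i = cyc_lap n (P t) i)
    by (intros; exact (phibar_cyc_lap n (fun j => phi j t) i hn Hi)).
  assert (HQ : forall t, t > t0 -> rsum (Q t) n = 0)
    by (exact (rate_error_sum_zero n komega xi k t0 phi omega hn hk hxi hcomega hinit hdomega)).
  assert (Hconv := error_system_decay n kphi komega a t0 P Q ltac:(lia) hkphi hkomega
    (fun t j Ht Hj => phase_offset_deriv n kphi a t xi phi omega j hn Hj (hdphi j t Hj Ht))
    (fun t j Ht Hj => rate_error_deriv n komega a t xi phi omega j hn Hj (hdomega j t Hj Ht))
    HQ).
  split.
  - intros e He. destruct (Hconv e He) as [T [_ HT]]. exists T. intros t Ht.
    rewrite Rminus_0_r, Herr. apply HT; auto.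
  - (* phi_i' = Q_i + a - kphi (L P)_i, and both Q_i and (L P)_i become small. *)
    intros e He.
    destruct (Hconv (e / (1 + kphi))) as [T [HT0 HT]]; [apply Rdiv_lt_0_compat; lra|].
    exists T. split; auto. intros t l Ht Hl.
    rewrite (uniqueness_limite _ _ _ _ Hl (hdphi i t Hi ltac:(lra))).
    replace (omega i t + kphi * (phibar n (fun j => phi j t) i - phi i t) + xi i - a)
      with (Q t i + - (kphi * cyc_lap n (P t) i))
      by (unfold Q; rewrite <- Herr; ring).
    destruct (HT t Ht i Hi) as [HL HQi].
    eapply Rle_lt_trans; [apply Rabs_triang|].
    rewrite Rabs_Ropp, Rabs_mult, (Rabs_right kphi) by lra.
    assert (e / (1 + kphi) * (1 + kphi) = e) by (field; lra).
    nra.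
Qed.
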